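(* Let $N\ge 3$. There exists a subset $\mathbb{S}\subset\mathbb{R}_+$ which is dense in $\mathbb{R}_+$ such that for every $M\in\mathbb{S}$ the equation $$V_{ss}+(5-N)V_s s^{-1}+\tfrac12 V_s s^{-3}-V_sVs^{-1}-2(N-2)Vs^{-2}+(N-2)V^2s^{-2}=0$$ admits a local solution $V$ with $V(0)=M$, i.e. there is $L>0$ and $V\in C([0,L])\cap C^2((0,L))$ satisfying the equation on $(0,L)$ with $V(0)=M$.
   Context: $\mathbb{R}_+=(0,\infty)$. This equation arises from the stationary self-similar equation $\phi_{\xi\xi}+(\frac{N+1}{\xi}-\frac{\xi}{2})\phi_\xi-\phi+\phi(\xi\phi_\xi+N\phi)=0$ via $V(s)=\phi(\xi)\xi^2$, $s=1/\xi$. *)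

From Stdlib Require Import Reals.
From Coquelicot Require Import Coquelicot.
Open Scope R_scope.

Definition ode_lhs (N : nat) (s v v1 v2 : R) : R :=
  v2 + (5 - INR N) * v1 / s + / 2 * v1 / (s ^ 3) - v1 * v / s
  - 2 * (INR N - 2) * v / (s ^ 2) + (INR N - 2) * (v ^ 2) / (s ^ 2).

From Stdlib Require Import Reals Lra Lia.
From Coquelicot Require Import Coquelicot.
Open Scope R_scope.

(* With U = V_s and E(s) = exp (-1/(4 s^2)) one has E' = E / (2 s^3), so E is an
   integrating factor for the singular term V_s s^{-3}/2 and the equation becomes
     (E U)' = E f(V) / s^2 + E (N - 5 + V) U / s,    f(V) = (N - 2) V (2 - V),
     V = M + \int_0^s U.
   As E(s)/s^k is flat at 0, U(s) = E(s)^{-1} \int_0^s (...) is well defined, and for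
   L small the right-hand side is a 1/2-contraction in the sup norm on continuous U
   with |U| <= 1 (the kernel gains a factor s from E(r)/r^2 <= s E(r)/r^3 and
   \int_0^s E/r^3 = 2 E(s)).  Its fixed point, the limit of Picard iterates, gives a
   solution with V(0) = M for every M > 0, so S can be taken to be all of R_+. *)

Lemma continuous_of_eps_delta (f : R -> R) x :
  (forall eps, 0 < eps ->
     exists d, 0 < d /\ forall y, Rabs (y - x) < d -> Rabs (f y - f x) < eps) ->
  continuous f x.
Proof.
  intros H. apply filterlim_locally. intros eps.
  destruct (H eps (cond_pos eps)) as [d [Hd Hy]].
  exists (mkposreal d Hd). intros y Hb. exact (Hy y Hb).
Qed.

Lemma locally_open_interval a b s : a < s < b -> locally s (fun t => a < t < b).
Proof.
  intros Hs. exists (mkposreal (Rmin (s - a) (b - s)) ltac:(apply Rmin_pos; lra)).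
  intros t Ht. change (Rabs (t - s) < Rmin (s - a) (b - s)) in Ht.
  apply Rabs_lt_between in Ht.
  pose proof (Rmin_l (s - a) (b - s)). pose proof (Rmin_r (s - a) (b - s)). lra.
Qed.

Lemma half_pow_eventually_lt eps : 0 < eps ->
  exists N, forall n, (N <= n)%nat -> (1/2) ^ n < eps.
Proof.
  intros He. destruct (pow_lt_1_zero (1/2) ltac:(rewrite Rabs_pos_eq; lra) eps He) as [N HN].
  exists N. intros n Hn. specialize (HN n Hn).
  rewrite Rabs_pos_eq in HN by (apply pow_le; lra). exact HN.
Qed.

Lemma Rle_of_le_add_half_pow a b c : (forall n, a <= b + c * (1/2) ^ n) -> a <= b.
Proof.
  intros H. apply Rnot_lt_le. intros Hba.
  destruct (Rle_dec c 0) as [Hc | Hc].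
  - specialize (H 0%nat). simpl in H. lra.
  - destruct (half_pow_eventually_lt ((a - b) / c)) as [n Hn];
      [apply Rdiv_lt_0_compat; lra |].
    specialize (Hn n (le_n n)). specialize (H n).
    apply Rmult_lt_compat_l with (r := c) in Hn; [| lra].
    replace (c * ((a - b) / c)) with (a - b) in Hn by (field; lra). lra.
Qed.

Lemma ex_RInt_of_continuous (f : R -> R) a b :
  (forall x, continuous f x) -> ex_RInt f a b.
Proof. intros Hf. apply (ex_RInt_continuous (V := R_CompleteNormedModule)); auto. Qed.

Lemma is_derive_RInt_0 (f : R -> R) x :
  (forall y, continuous f y) -> is_derive (fun r => RInt f 0 r) x (f x).
Proof.
  intros Hf. apply (is_derive_RInt (V := R_NormedModule) f _ 0 x); auto.
  apply filter_forall. intros b.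
  apply (RInt_correct (V := R_CompleteNormedModule)), ex_RInt_of_continuous; auto.
Qed.

Lemma continuous_Rdiv_fun (g h : R -> R) x :
  continuous g x -> continuous h x -> h x <> 0 -> continuous (fun t => g t / h t) x.
Proof.
  intros Hg Hh Hx. apply (continuous_mult (K := R_AbsRing) g (fun t => / h t)); auto.
  apply continuous_Rinv_comp; auto.
Qed.

Definition weight (k : nat) (x : R) : R :=
  if Rle_dec x 0 then 0 else exp (- / (4 * x ^ 2)) / x ^ k.

Lemma weight_pos k x : 0 < x -> weight k x = exp (- / (4 * x ^ 2)) / x ^ k.
Proof. intros H; unfold weight; destruct (Rle_dec x 0); [lra | auto]. Qed.

Lemma weight_nonpos k x : x <= 0 -> weight k x = 0.
Proof. intros H; unfold weight; destruct (Rle_dec x 0); [auto | lra]. Qed.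

Lemma weight_ge0 k x : 0 <= weight k x.
Proof.
  unfold weight; destruct (Rle_dec x 0); [lra|].
  apply Rlt_le, Rdiv_lt_0_compat; [apply exp_pos | apply pow_lt; lra].
Qed.

Lemma weight0_gt0 x : 0 < x -> 0 < weight 0 x.
Proof. intros H; rewrite weight_pos by auto; simpl; rewrite Rdiv_1_r; apply exp_pos. Qed.

Lemma weight_succ k x : 0 < x -> weight k x = x * weight (S k) x.
Proof.
  intros H. rewrite !weight_pos by auto. simpl. field.
  split; [apply pow_nonzero |]; lra.
Qed.

(* From [exp y >= y^2/4] for [y = 1/(4 h^2)], via [exp y = exp (y/2)^2]. *)
Lemma exp_neg_inv_sq_le h : 0 < h -> exp (- / (4 * h ^ 2)) <= 64 * h ^ 4.
Proof.
  intros Hh. set (y := / (4 * h ^ 2)).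
  assert (Hy : 0 < y) by (unfold y; apply Rinv_0_lt_compat; nra).
  assert (Hsq : exp y = exp (y / 2) * exp (y / 2)) by (rewrite <- exp_plus; f_equal; lra).
  assert (Hlin : 1 + y / 2 < exp (y / 2)) by (apply exp_ineq1; lra).
  assert (Hquad : y * y / 4 < exp y) by nra.
  assert (Hinv : 64 * h ^ 4 = / (y * y / 4)) by (unfold y; field; lra).
  rewrite exp_Ropp, Hinv. apply Rlt_le, Rinv_lt_contravar; [| exact Hquad].
  apply Rmult_lt_0_compat; [nra | apply exp_pos].
Qed.

Lemma weight_le_lin k x : (k <= 3)%nat -> 0 < x <= 1 -> weight k x <= 64 * x.
Proof.
  intros Hk Hx. rewrite weight_pos by lra.
  pose proof (exp_neg_inv_sq_le x (proj1 Hx)) as Hexp.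
  assert (Hsplit : x ^ 4 = x ^ (4 - k) * x ^ k) by (rewrite <- pow_add; f_equal; lia).
  assert (Hxk : 0 < x ^ k) by (apply pow_lt; lra).
  assert (Hle : x ^ (4 - k) <= x).
  { replace (4 - k)%nat with (S (3 - k)) by lia. rewrite <- tech_pow_Rmult.
    assert (Hpow : x ^ (3 - k) <= 1) by (rewrite <- (pow1 (3 - k)); apply pow_incr; lra).
    apply Rmult_le_compat_l with (r := x) in Hpow; lra. }
  apply Rmult_le_reg_r with (x ^ k); auto.
  unfold Rdiv. rewrite Rmult_assoc, Rinv_l by lra. nra.
Qed.

Lemma continuous_weight k x : (k <= 3)%nat -> continuous (weight k) x.
Proof.
  intros Hk. destruct (Rtotal_order x 0) as [Hx | [-> | Hx]].
  - apply continuous_ext_loc with (fun _ => 0); [| apply continuous_const].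
    apply (filter_imp (fun t => x - 1 < t < 0)); [| apply locally_open_interval; lra].
    intros t Ht. symmetry. apply weight_nonpos. lra.
  - apply continuous_of_eps_delta. intros eps He. exists (Rmin 1 (eps / 64)).
    split; [apply Rmin_pos; lra |]. intros y Hy.
    rewrite Rminus_0_r in Hy. apply Rabs_lt_between in Hy.
    pose proof (Rmin_l 1 (eps / 64)). pose proof (Rmin_r 1 (eps / 64)).
    rewrite (weight_nonpos k 0), Rminus_0_r by lra.
    destruct (Rle_dec y 0).
    + rewrite weight_nonpos, Rabs_R0 by auto. lra.
    + rewrite Rabs_pos_eq by apply weight_ge0.
      pose proof (weight_le_lin k y Hk ltac:(lra)). lra.
  - apply continuous_ext_loc with (fun y => exp (- / (4 * y ^ 2)) / y ^ k).
    + apply (filter_imp (fun t => 0 < t < x + 1)); [| apply locally_open_interval; lra].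
      intros t Ht. symmetry. apply weight_pos. lra.
    + apply (ex_derive_continuous (K := R_AbsRing) (V := R_NormedModule)).
      assert (x ^ k <> 0) by (apply pow_nonzero; lra).
      auto_derive. repeat split; auto. intro; nra.
Qed.

Lemma is_derive_weight0 x : is_derive (weight 0) x (weight 3 x / 2).
Proof.
  destruct (Rtotal_order x 0) as [Hx | [-> | Hx]].
  - rewrite weight_nonpos, Rdiv_0_l by lra.
    apply is_derive_ext_loc with (fun _ => 0);
      [| exact (is_derive_const (K := R_AbsRing) (V := R_NormedModule) 0 x)].
    apply (filter_imp (fun t => x - 1 < t < 0)); [| apply locally_open_interval; lra].
    intros t Ht. symmetry. apply weight_nonpos. lra.
  - rewrite weight_nonpos, Rdiv_0_l by lra.
    apply is_derive_Reals. intros eps He.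
    exists (mkposreal (Rmin 1 (eps / 64)) ltac:(apply Rmin_pos; lra)).
    intros h Hh0 Hh. simpl in Hh. apply Rabs_lt_between in Hh.
    pose proof (Rmin_l 1 (eps / 64)). pose proof (Rmin_r 1 (eps / 64)).
    rewrite Rplus_0_l, (weight_nonpos 0 0), !Rminus_0_r by lra.
    destruct (Rle_dec h 0).
    + rewrite weight_nonpos, Rdiv_0_l, Rabs_R0 by auto. lra.
    + rewrite (weight_succ 0 h) by lra.
      replace (h * weight 1 h / h) with (weight 1 h) by (field; lra).
      rewrite Rabs_pos_eq by apply weight_ge0.
      pose proof (weight_le_lin 1 h ltac:(lia) ltac:(lra)). lra.
  - apply is_derive_ext_loc with (fun y => exp (- / (4 * y ^ 2))).
    + apply (filter_imp (fun t => 0 < t < x + 1)); [| apply locally_open_interval; lra].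
      intros t Ht. rewrite weight_pos by lra. simpl. field.
    + rewrite weight_pos by lra. auto_derive; [intro; nra |]. simpl. field. lra.
Qed.

Lemma is_RInt_weight3 s : 0 <= s -> is_RInt (weight 3) 0 s (2 * weight 0 s).
Proof.
  intros Hs.
  replace (2 * weight 0 s) with (minus (2 * weight 0 s) (2 * weight 0 0)).
  2: { rewrite (weight_nonpos 0 0) by lra. unfold minus, plus, opp; simpl. ring. }
  apply (is_RInt_derive (V := R_CompleteNormedModule) (fun y => 2 * weight 0 y)).
  - intros x _. replace (weight 3 x) with (2 * (weight 3 x / 2)) by field.
    apply is_derive_scal, is_derive_weight0.
  - intros x _. apply continuous_weight. lia.
Qed.

Lemma abs_RInt_le_weight3 (f : R -> R) c s :
  (forall y, continuous f y) -> 0 <= s ->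
  (forall r, 0 <= r <= s -> Rabs (f r) <= c * weight 3 r) ->
  Rabs (RInt f 0 s) <= 2 * c * weight 0 s.
Proof.
  intros Hf Hs Hle.
  assert (Hg : is_RInt (fun r => c * weight 3 r) 0 s (c * (2 * weight 0 s)))
    by (apply (is_RInt_scal (V := R_NormedModule)), is_RInt_weight3; auto).
  assert (Hgi : ex_RInt (fun r => c * weight 3 r) 0 s) by (eexists; eauto).
  assert (Habs : ex_RInt (fun r => Rabs (f r)) 0 s)
    by (apply ex_RInt_of_continuous; intros; apply (continuous_comp f Rabs); auto;
        apply continuous_Rabs).
  eapply Rle_trans; [apply abs_RInt_le; auto; apply ex_RInt_of_continuous; auto |].
  replace (2 * c * weight 0 s) with (c * (2 * weight 0 s)) by ring.
  rewrite <- (is_RInt_unique _ _ _ _ Hg).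
  apply RInt_le; auto. intros x Hx. apply Hle. lra.
Qed.

Lemma Rabs_div_weight0_le X c s : 0 < s -> Rabs X <= c * weight 0 s ->
  Rabs (X / weight 0 s) <= c.
Proof.
  intros Hs HX. pose proof (weight0_gt0 s Hs) as Hw.
  unfold Rdiv. rewrite Rabs_mult, (Rabs_pos_eq (/ _)) by (apply Rlt_le, Rinv_0_lt_compat; auto).
  apply Rmult_le_reg_r with (weight 0 s); auto.
  rewrite Rmult_assoc, Rinv_l by lra. lra.
Qed.

Definition admissible (U : R -> R) : Prop :=
  (forall x, continuous U x) /\ (forall x, Rabs (U x) <= 1).

Section ContractionFixpoint.

Variable T : (R -> R) -> R -> R.
Hypothesis T_admissible : forall U, admissible U -> admissible (T U).
Hypothesis T_contraction : forall U1 U2 d, admissible U1 -> admissible U2 ->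
  (forall x, Rabs (U1 x - U2 x) <= d) -> forall x, Rabs (T U1 x - T U2 x) <= d / 2.

Definition picard_iterate (n : nat) : R -> R := Nat.iter n T (fun _ => 0).

Lemma admissible_picard_iterate n : admissible (picard_iterate n).
Proof.
  induction n as [| n IH]; simpl; auto.
  split; intros x; [apply continuous_const | rewrite Rabs_R0; lra].
Qed.

Lemma picard_iterate_step n x :
  Rabs (picard_iterate (S n) x - picard_iterate n x) <= 2 * (1/2) ^ n.
Proof.
  revert x; induction n as [| n IH]; intros x.
  - destruct (admissible_picard_iterate 1) as [_ Hb].
    specialize (Hb x). simpl in *. rewrite Rminus_0_r. lra.
  - change (Rabs (T (picard_iterate (S n)) x - T (picard_iterate n) x)
            <= 2 * (1/2) ^ S n).
    eapply Rle_trans; [apply T_contraction; [apply admissible_picard_iterate .. | exact IH] |].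
    simpl. lra.
Qed.

Lemma picard_iterate_cauchy n m x : (n <= m)%nat ->
  Rabs (picard_iterate m x - picard_iterate n x) <= 4 * (1/2) ^ n.
Proof.
  intros Hnm. replace m with (n + (m - n))%nat by lia.
  enough (Hk : forall k, Rabs (picard_iterate (n + k) x - picard_iterate n x)
                         <= 4 * (1/2) ^ n - 4 * (1/2) ^ (n + k)).
  { pose proof (pow_le (1/2) (n + (m - n))). specialize (Hk (m - n)%nat). lra. }
  induction k as [| k IH].
  - rewrite Nat.add_0_r, Rminus_diag, Rabs_R0. lra.
  - replace (n + S k)%nat with (S (n + k)) by lia.
    pose proof (picard_iterate_step (n + k) x).
    replace (picard_iterate (S (n + k)) x - picard_iterate n x) with
      ((picard_iterate (S (n + k)) x - picard_iterate (n + k) x)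
       + (picard_iterate (n + k) x - picard_iterate n x)) by ring.
    eapply Rle_trans; [apply Rabs_triang |]. rewrite <- tech_pow_Rmult. lra.
Qed.

Definition picard_limit (x : R) : R := real (Lim_seq (fun n => picard_iterate n x)).

Lemma is_lim_seq_picard_limit x :
  is_lim_seq (fun n => picard_iterate n x) (picard_limit x).
Proof.
  assert (Hex : ex_finite_lim_seq (fun n => picard_iterate n x)).
  { apply ex_lim_seq_cauchy_corr. intros eps.
    destruct (half_pow_eventually_lt (eps / 4)) as [N HN];
      [pose proof (cond_pos eps); lra |].
    exists N. intros n m Hn Hm.
    assert (Hmono : forall p, (N <= p)%nat -> 4 * (1/2) ^ p < eps)
      by (intros p Hp; specialize (HN p Hp); lra).
    destruct (Nat.le_ge_cases n m) as [Hle | Hle].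
    - rewrite Rabs_minus_sym. eapply Rle_lt_trans; [apply picard_iterate_cauchy, Hle |].
      apply Hmono, Hn.
    - eapply Rle_lt_trans; [apply picard_iterate_cauchy, Hle |]. apply Hmono, Hm. }
  destruct Hex as [l Hl]. unfold picard_limit. rewrite (is_lim_seq_unique _ _ Hl). exact Hl.
Qed.

Lemma picard_limit_close n x :
  Rabs (picard_limit x - picard_iterate n x) <= 4 * (1/2) ^ n.
Proof.
  pose proof (proj1 (is_lim_seq_incr_n _ n _) (is_lim_seq_picard_limit x)) as Hl.
  apply (is_lim_seq_le (fun k => Rabs (picard_iterate (k + n) x - picard_iterate n x))
                       (fun _ => 4 * (1/2) ^ n)
                       (Rabs (picard_limit x - picard_iterate n x)) (4 * (1/2) ^ n)).
  - intros k. apply picard_iterate_cauchy. lia.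
  - apply (is_lim_seq_abs _ (picard_limit x - picard_iterate n x)).
    apply (is_lim_seq_minus' _ _ _ _ Hl (is_lim_seq_const _)).
  - apply is_lim_seq_const.
Qed.

Lemma admissible_picard_limit : admissible picard_limit.
Proof.
  split.
  - intros x. apply continuity_pt_filterlim.
    apply (CVU_continuity picard_iterate picard_limit x (mkposreal 1 Rlt_0_1)).
    + intros eps Heps.
      destruct (half_pow_eventually_lt (eps / 4)) as [N HN]; [lra |].
      exists N. intros n y Hn _. specialize (HN n Hn).
      pose proof (picard_limit_close n y). lra.
    + intros n y _. apply continuity_pt_filterlim, admissible_picard_iterate.
    + unfold Boule. rewrite Rminus_diag, Rabs_R0. simpl. lra.
  - intros x. apply (Rle_of_le_add_half_pow _ _ 4). intros n.
    pose proof (picard_limit_close n x).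
    destruct (admissible_picard_iterate n) as [_ Hb]. specialize (Hb x).
    pose proof (Rabs_triang_inv (picard_limit x) (picard_iterate n x)). lra.
Qed.

Lemma picard_limit_fixed x : T picard_limit x = picard_limit x.
Proof.
  apply Rminus_diag_uniq, Rabs_eq_0, Rle_antisym; [| apply Rabs_pos].
  apply (Rle_of_le_add_half_pow _ _ 4). intros n.
  pose proof (picard_limit_close (S n) x) as Hclose.
  change (picard_iterate (S n)) with (T (picard_iterate n)) in Hclose.
  rewrite <- tech_pow_Rmult in Hclose.
  assert (Hcontr : Rabs (T picard_limit x - T (picard_iterate n) x) <= 4 * (1/2) ^ n / 2)
    by (apply T_contraction; [apply admissible_picard_limit | apply admissible_picard_iterate
                             | apply picard_limit_close]).
  replace (T picard_limit x - picard_limit x)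
    with ((T picard_limit x - T (picard_iterate n) x)
          + - (picard_limit x - T (picard_iterate n) x)) by ring.
  eapply Rle_trans; [apply Rabs_triang |]. rewrite Rabs_Ropp. lra.
Qed.

Lemma contraction_fixpoint : exists U, admissible U /\ forall x, T U x = U x.
Proof. exists picard_limit. split; [apply admissible_picard_limit | apply picard_limit_fixed]. Qed.

End ContractionFixpoint.

Definition primitive (M : R) (U : R -> R) (r : R) : R := M + RInt U 0 r.

Lemma primitive_0 M U : primitive M U 0 = M.
Proof. unfold primitive. rewrite RInt_point. apply Rplus_0_r. Qed.

Lemma is_derive_primitive M U x :
  (forall y, continuous U y) -> is_derive (primitive M U) x (U x).
Proof.
  intros HU. unfold primitive. rewrite <- (Rplus_0_l (U x)).
  apply (is_derive_plus (K := R_AbsRing) (V := R_NormedModule) (fun _ => M)).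
  - exact (is_derive_const (K := R_AbsRing) (V := R_NormedModule) M x).
  - apply is_derive_RInt_0; auto.
Qed.

Lemma continuous_primitive M U x :
  (forall y, continuous U y) -> continuous (primitive M U) x.
Proof.
  intros HU. apply (ex_derive_continuous (K := R_AbsRing) (V := R_NormedModule)).
  eexists. apply is_derive_primitive; auto.
Qed.

Lemma Derive_primitive M U x :
  (forall y, continuous U y) -> Derive (primitive M U) x = U x.
Proof. intros HU. apply is_derive_unique, is_derive_primitive; auto. Qed.

Lemma primitive_near M U r : admissible U -> 0 <= r -> Rabs (primitive M U r - M) <= r.
Proof.
  intros [HU Hb] Hr. unfold primitive. rewrite Rplus_minus_l.
  replace r with ((r - 0) * 1) at 2 by ring.
  apply abs_RInt_le_const; auto. apply ex_RInt_of_continuous; auto.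
Qed.

Lemma primitive_dist M U1 U2 r d : admissible U1 -> admissible U2 ->
  (forall x, Rabs (U1 x - U2 x) <= d) -> 0 <= r ->
  Rabs (primitive M U1 r - primitive M U2 r) <= r * d.
Proof.
  intros [HU1 _] [HU2 _] Hd Hr. unfold primitive.
  replace (M + RInt U1 0 r - (M + RInt U2 0 r)) with (RInt (fun x => U1 x - U2 x) 0 r).
  - replace r with (r - 0) at 2 by ring. apply abs_RInt_le_const; auto.
    apply (ex_RInt_minus (V := R_NormedModule)); apply ex_RInt_of_continuous; auto.
  - rewrite (RInt_minus (V := R_CompleteNormedModule) U1 U2)
      by (apply ex_RInt_of_continuous; auto).
    unfold minus, plus, opp; simpl. ring.
Qed.

Definition clamp (L x : R) : R := Rmin L (Rmax 0 x).

Lemma clamp_range L x : 0 < L -> 0 <= clamp L x <= L.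
Proof. intros; unfold clamp, Rmin, Rmax; repeat destruct Rle_dec; lra. Qed.

Lemma clamp_id L x : 0 <= x <= L -> clamp L x = x.
Proof. intros; unfold clamp, Rmin, Rmax; repeat destruct Rle_dec; lra. Qed.

Lemma continuous_clamp L x : 0 < L -> continuous (clamp L) x.
Proof.
  intros HL. apply continuous_of_eps_delta. intros eps He. exists eps. split; auto.
  intros y Hy. eapply Rle_lt_trans; [| exact Hy].
  unfold clamp, Rmin, Rmax; repeat destruct Rle_dec;
  unfold Rabs; repeat destruct Rcase_abs; lra.
Qed.

Section Duhamel.

Variables (a M L C : R) (f : R -> R).
Hypothesis f_continuous : forall v, continuous f v.
Hypothesis f_bound : forall v, Rabs (v - M) <= 1 -> Rabs (f v) <= C.
Hypothesis f_lip : forall v w, Rabs (v - M) <= 1 -> Rabs (w - M) <= 1 ->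
  Rabs (f v - f w) <= C * Rabs (v - w).
Hypothesis drift_bound : forall v, Rabs (v - M) <= 1 -> Rabs (a + v) <= C.
Hypothesis C_ge1 : 1 <= C.
Hypothesis L_pos : 0 < L.
Hypothesis L_le1 : L <= 1.
Hypothesis CL_small : 12 * C * L <= 1.

Definition source (U : R -> R) (r : R) : R :=
  weight 2 r * f (primitive M U r) + weight 1 r * ((a + primitive M U r) * U r).

Definition duhamel (U : R -> R) (s : R) : R := RInt (source U) 0 s / weight 0 s.

(* Only [[0, L]] matters; clamping extends the map to functions on all of R that
   stay continuous and bounded. *)
Definition picard_map (U : R -> R) (x : R) : R := duhamel U (clamp L x).

Lemma continuous_source U x : admissible U -> continuous (source U) x.
Proof.
  intros [HU _]. unfold source.
  pose proof (continuous_primitive M U x HU) as HV.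
  apply (continuous_plus (K := R_AbsRing) (V := R_NormedModule)).
  - apply (continuous_mult (K := R_AbsRing)); [apply continuous_weight; lia |].
    apply (continuous_comp (primitive M U) f); auto.
  - apply (continuous_mult (K := R_AbsRing)); [apply continuous_weight; lia |].
    apply (continuous_mult (K := R_AbsRing)); auto.
    apply (continuous_plus (K := R_AbsRing) (V := R_NormedModule)); auto.
    apply continuous_const.
Qed.

Lemma source_le U r s : admissible U -> 0 <= r <= s -> s <= L ->
  Rabs (source U r) <= 2 * C * s * weight 3 r.
Proof.
  intros HU Hr Hs. pose proof (weight_ge0 3 r) as He.
  destruct (Rle_dec r 0) as [Hr0 | Hr0].
  { unfold source. rewrite !weight_nonpos, !Rmult_0_l, Rplus_0_r, Rabs_R0 by auto. lra. }
  pose proof (primitive_near M U r HU (proj1 Hr)) as HV.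
  destruct HU as [_ Hb]. specialize (Hb r).
  assert (Hf : Rabs (f (primitive M U r)) <= C) by (apply f_bound; lra).
  assert (Hd : Rabs ((a + primitive M U r) * U r) <= C).
  { rewrite Rabs_mult. pose proof (drift_bound (primitive M U r) ltac:(lra)).
    pose proof (Rabs_pos (a + primitive M U r)). nra. }
  unfold source. rewrite (weight_succ 1 r), (weight_succ 2 r) by lra.
  eapply Rle_trans; [apply Rabs_triang |].
  rewrite (Rabs_mult (r * weight 3 r)), (Rabs_mult (r * (r * weight 3 r))).
  rewrite (Rabs_pos_eq (r * weight 3 r)), (Rabs_pos_eq (r * (r * weight 3 r))) by nra.
  set (e := weight 3 r) in *.
  assert (H1 : r * e * Rabs (f (primitive M U r)) <= s * e * C).
  { apply Rle_trans with (r * e * C); [apply Rmult_le_compat_l; nra |].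
    apply Rmult_le_compat_r; [lra |]. apply Rmult_le_compat_r; lra. }
  assert (H2 : r * (r * e) * Rabs ((a + primitive M U r) * U r) <= s * e * C).
  { apply Rle_trans with (r * (r * e) * C); [apply Rmult_le_compat_l; nra |].
    apply Rmult_le_compat_r; [lra |].
    assert (r * r <= s) by nra. rewrite <- Rmult_assoc. apply Rmult_le_compat_r; lra. }
  lra.
Qed.

Lemma source_dist U1 U2 d r : admissible U1 -> admissible U2 ->
  (forall x, Rabs (U1 x - U2 x) <= d) -> 0 <= r <= L ->
  Rabs (source U1 r - source U2 r) <= 3 * C * L * d * weight 3 r.
Proof.
  intros HU1 HU2 Hd Hr.
  assert (Hd0 : 0 <= d) by (eapply Rle_trans; [apply Rabs_pos | apply (Hd 0)]).
  destruct (Rle_dec r 0) as [Hr0 | Hr0].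
  { unfold source. rewrite !weight_nonpos by auto. rewrite Rmult_0_r.
    replace (_ - _) with 0 by ring. rewrite Rabs_R0. lra. }
  pose proof (weight_ge0 3 r) as He.
  pose proof (primitive_near M U1 r HU1 (proj1 Hr)) as HV1.
  pose proof (primitive_near M U2 r HU2 (proj1 Hr)) as HV2.
  pose proof (primitive_dist M U1 U2 r d HU1 HU2 Hd (proj1 Hr)) as HV12.
  pose proof (proj2 HU2 r) as HB2. pose proof (Hd r) as HdU.
  unfold source. rewrite (weight_succ 1 r), (weight_succ 2 r) by lra.
  set (e := weight 3 r) in *.
  set (v1 := primitive M U1 r) in *. set (v2 := primitive M U2 r) in *.
  assert (Hf : Rabs (f v1 - f v2) <= C * (r * d)).
  { eapply Rle_trans; [apply f_lip; lra |]. apply Rmult_le_compat_l; lra. }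
  assert (Hlin : Rabs ((a + v1) * (U1 r - U2 r) + (v1 - v2) * U2 r) <= C * d + r * d).
  { eapply Rle_trans; [apply Rabs_triang |]. rewrite !Rabs_mult.
    pose proof (drift_bound v1 ltac:(lra)).
    pose proof (Rabs_pos (a + v1)). pose proof (Rabs_pos (v1 - v2)).
    pose proof (Rabs_pos (U1 r - U2 r)). pose proof (Rabs_pos (U2 r)).
    apply Rplus_le_compat; nra. }
  replace (r * e * f v1 + r * (r * e) * ((a + v1) * U1 r)
           - (r * e * f v2 + r * (r * e) * ((a + v2) * U2 r)))
    with (r * e * (f v1 - f v2)
          + r * (r * e) * ((a + v1) * (U1 r - U2 r) + (v1 - v2) * U2 r)) by ring.
  eapply Rle_trans; [apply Rabs_triang |].
  rewrite !Rabs_mult, (Rabs_pos_eq r), (Rabs_pos_eq e) by lra.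
  assert (Hrr : r * r <= L) by nra.
  assert (Hbound : r * r * (2 * C + r) <= 3 * C * L).
  { apply Rle_trans with (L * (2 * C + r)); [apply Rmult_le_compat_r; lra |]. nra. }
  pose proof (Rabs_pos (f v1 - f v2)).
  pose proof (Rabs_pos ((a + v1) * (U1 r - U2 r) + (v1 - v2) * U2 r)).
  apply Rle_trans with (r * e * (C * (r * d)) + r * (r * e) * (C * d + r * d)).
  - apply Rplus_le_compat; apply Rmult_le_compat_l; nra.
  - replace (r * e * (C * (r * d)) + r * (r * e) * (C * d + r * d))
      with (e * d * (r * r * (2 * C + r))) by ring.
    replace (3 * C * L * d * e) with (e * d * (3 * C * L)) by ring.
    apply Rmult_le_compat_l; nra.
Qed.

Lemma duhamel_nonpos U s : s <= 0 -> duhamel U s = 0.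
Proof.
  intros Hs. unfold duhamel.
  rewrite (RInt_ext (V := R_CompleteNormedModule) (source U) (fun _ => 0)).
  - rewrite RInt_const. simpl. unfold scal; simpl. unfold mult; simpl.
    rewrite Rmult_0_r. apply Rdiv_0_l.
  - intros x Hx. rewrite Rmin_right, Rmax_left in Hx by lra. unfold source.
    rewrite !weight_nonpos, !Rmult_0_l by lra. apply Rplus_0_r.
Qed.

Lemma duhamel_le U s : admissible U -> 0 < s <= L -> Rabs (duhamel U s) <= 4 * C * s.
Proof.
  intros HU Hs. unfold duhamel. apply Rabs_div_weight0_le; [lra |].
  replace (4 * C * s) with (2 * (2 * C * s)) by ring.
  apply abs_RInt_le_weight3; [intros; apply continuous_source; auto | lra |].
  intros r Hr. apply source_le; auto; lra.
Qed.

Lemma duhamel_dist U1 U2 d s : admissible U1 -> admissible U2 ->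
  (forall x, Rabs (U1 x - U2 x) <= d) -> 0 < s <= L ->
  Rabs (duhamel U1 s - duhamel U2 s) <= d / 2.
Proof.
  intros HU1 HU2 Hd Hs.
  assert (Hd0 : 0 <= d) by (eapply Rle_trans; [apply Rabs_pos | apply (Hd 0)]).
  assert (Hsrc : forall y, continuous (fun r => source U1 r - source U2 r) y).
  { intros y. apply (continuous_minus (K := R_AbsRing) (V := R_NormedModule));
      apply continuous_source; auto. }
  unfold duhamel, Rdiv at 1 2. rewrite <- Rmult_minus_distr_r. fold Rdiv.
  replace (RInt (source U1) 0 s - RInt (source U2) 0 s)
    with (RInt (fun r => source U1 r - source U2 r) 0 s)
    by (apply (RInt_minus (V := R_CompleteNormedModule));
        apply ex_RInt_of_continuous; intros; apply continuous_source; auto).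
  apply Rabs_div_weight0_le; [lra |].
  eapply Rle_trans.
  - apply (abs_RInt_le_weight3 _ (3 * C * L * d)); auto; [lra |].
    intros r Hr. apply source_dist; auto; lra.
  - apply Rmult_le_compat_r; [apply weight_ge0 |]. nra.
Qed.

Lemma is_derive_duhamel U s : admissible U -> 0 < s ->
  is_derive (duhamel U) s
    (f (primitive M U s) / s ^ 2 + (a + primitive M U s) * U s / s
     - duhamel U s / (2 * s ^ 3)).
Proof.
  intros HU Hs. pose proof (weight0_gt0 s Hs) as Hw.
  unfold duhamel at 1.
  replace (f (primitive M U s) / s ^ 2 + (a + primitive M U s) * U s / s
           - duhamel U s / (2 * s ^ 3))
    with ((source U s * weight 0 s - RInt (source U) 0 s * (weight 3 s / 2)) / weight 0 s ^ 2).
  - apply is_derive_div; [| apply is_derive_weight0 | lra].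
    apply is_derive_RInt_0. intros; apply continuous_source; auto.
  - unfold duhamel, source. rewrite !weight_pos by lra.
    pose proof (exp_pos (- / (4 * s ^ 2))). field. lra.
Qed.

Lemma continuous_duhamel U s : admissible U -> 0 <= s -> continuous (duhamel U) s.
Proof.
  intros HU Hs. destruct (Rle_lt_or_eq_dec 0 s Hs) as [Hpos | <-].
  - apply (ex_derive_continuous (K := R_AbsRing) (V := R_NormedModule)).
    eexists. apply is_derive_duhamel; auto.
  - apply continuous_of_eps_delta. intros eps He.
    exists (Rmin L (eps / (4 * C))).
    split; [apply Rmin_pos; [lra | apply Rdiv_lt_0_compat; lra] |].
    intros y Hy. rewrite Rminus_0_r in Hy. apply Rabs_lt_between in Hy.
    pose proof (Rmin_l L (eps / (4 * C))). pose proof (Rmin_r L (eps / (4 * C))).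
    rewrite (duhamel_nonpos U 0), Rminus_0_r by lra.
    destruct (Rle_dec y 0).
    + rewrite duhamel_nonpos, Rabs_R0 by auto. lra.
    + eapply Rle_lt_trans; [apply duhamel_le; auto; lra |].
      apply Rmult_lt_reg_r with (/ (4 * C)); [apply Rinv_0_lt_compat; lra |].
      replace (4 * C * y * / (4 * C)) with y by (field; lra). lra.
Qed.

Lemma admissible_picard_map U : admissible U -> admissible (picard_map U).
Proof.
  intros HU. split; intros x; unfold picard_map; pose proof (clamp_range L x L_pos).
  - apply (continuous_comp (clamp L) (duhamel U)); [apply continuous_clamp; auto |].
    apply continuous_duhamel; auto; lra.
  - destruct (Rle_dec (clamp L x) 0).
    + rewrite duhamel_nonpos, Rabs_R0 by auto. lra.
    + eapply Rle_trans; [apply duhamel_le; auto; lra |]. nra.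
Qed.

Lemma picard_map_contraction U1 U2 d : admissible U1 -> admissible U2 ->
  (forall x, Rabs (U1 x - U2 x) <= d) ->
  forall x, Rabs (picard_map U1 x - picard_map U2 x) <= d / 2.
Proof.
  intros HU1 HU2 Hd x. unfold picard_map. pose proof (clamp_range L x L_pos).
  destruct (Rle_dec (clamp L x) 0).
  - rewrite !duhamel_nonpos, Rminus_0_r, Rabs_R0 by auto.
    pose proof (Rle_trans _ _ _ (Rabs_pos _) (Hd 0)). lra.
  - apply duhamel_dist; auto. lra.
Qed.

Definition ode_rhs (U : R -> R) (t : R) : R :=
  f (primitive M U t) / t ^ 2 + (a + primitive M U t) * U t / t - U t / (2 * t ^ 3).

Lemma continuous_ode_rhs U s : admissible U -> 0 < s -> continuous (ode_rhs U) s.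
Proof.
  intros [HU _] Hs. pose proof (continuous_primitive M U s HU) as HV.
  assert (Hpow : forall k, continuous (fun t => t ^ k) s)
    by (intros; apply (ex_derive_continuous (K := R_AbsRing) (V := R_NormedModule));
        auto_derive; auto).
  unfold ode_rhs.
  apply (continuous_minus (K := R_AbsRing) (V := R_NormedModule)).
  - apply (continuous_plus (K := R_AbsRing) (V := R_NormedModule)).
    + apply continuous_Rdiv_fun; [apply (continuous_comp (primitive M U) f); auto | auto |].
      apply pow_nonzero. lra.
    + apply continuous_Rdiv_fun; [| apply continuous_id | lra].
      apply (continuous_mult (K := R_AbsRing)); auto.
      apply (continuous_plus (K := R_AbsRing) (V := R_NormedModule)); auto.
      apply continuous_const.
  - apply continuous_Rdiv_fun; auto; [| pose proof (pow_lt s 3 Hs); lra].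
    apply (continuous_mult (K := R_AbsRing) (fun _ => 2)); [apply continuous_const | auto].
Qed.

Lemma is_derive_picard_fixpoint U s : admissible U -> (forall x, picard_map U x = U x) ->
  0 < s < L -> is_derive U s (ode_rhs U s).
Proof.
  intros HU Hfix Hs.
  assert (Hloc : forall t, 0 <= t <= L -> duhamel U t = U t)
    by (intros t Ht; rewrite <- Hfix; unfold picard_map; rewrite clamp_id; auto).
  apply (is_derive_ext_loc (duhamel U)).
  - apply (filter_imp (fun t => 0 < t < L)); [intros t Ht; apply Hloc; lra |].
    apply locally_open_interval. lra.
  - unfold ode_rhs. rewrite <- (Hloc s) at 2 by lra. apply is_derive_duhamel; auto. lra.
Qed.

Lemma Derive2_primitive_fixpoint U s : admissible U -> (forall x, picard_map U x = U x) ->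
  0 < s < L -> Derive (Derive (primitive M U)) s = ode_rhs U s.
Proof.
  intros HU Hfix Hs. rewrite (Derive_ext _ U) by (intros; apply Derive_primitive, HU).
  apply is_derive_unique, is_derive_picard_fixpoint; auto.
Qed.

Lemma continuous_Derive2_primitive_fixpoint U s : admissible U ->
  (forall x, picard_map U x = U x) -> 0 < s < L ->
  continuous (Derive (Derive (primitive M U))) s.
Proof.
  intros HU Hfix Hs. apply continuous_ext_loc with (ode_rhs U).
  - apply (filter_imp (fun t => 0 < t < L)); [| apply locally_open_interval; lra].
    intros t Ht. symmetry. apply Derive2_primitive_fixpoint; auto.
  - apply continuous_ode_rhs; auto. lra.
Qed.

End Duhamel.

Definition reaction (n v : R) : R := (n - 2) * v * (2 - v).

Lemma ode_lhs_reaction N s v u : 0 < s ->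
  ode_lhs N s v u
    (reaction (INR N) v / s ^ 2 + (INR N - 5 + v) * u / s - u / (2 * s ^ 3)) = 0.
Proof. intros Hs. unfold ode_lhs, reaction. field. lra. Qed.

Section ReactionBounds.

Variables (n M v w : R).
Hypothesis n_ge2 : 2 <= n.
Hypothesis M_pos : 0 < M.
Hypothesis v_near : Rabs (v - M) <= 1.
Hypothesis w_near : Rabs (w - M) <= 1.

Lemma reaction_bounded : Rabs (reaction n v) <= (n + 2) * (M + 3) ^ 2.
Proof.
  apply Rabs_le_between in v_near. unfold reaction.
  rewrite !Rabs_mult, (Rabs_pos_eq (n - 2)) by lra.
  assert (Hv : Rabs v <= M + 1) by (apply Rabs_le; lra).
  assert (H2v : Rabs (2 - v) <= M + 3) by (apply Rabs_le; lra).
  pose proof (Rabs_pos v). pose proof (Rabs_pos (2 - v)).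
  apply Rle_trans with ((n - 2) * (M + 1) * (M + 3)); [| nra].
  apply Rmult_le_compat; [nra | lra | apply Rmult_le_compat_l; lra | lra].
Qed.

Lemma reaction_lipschitz :
  Rabs (reaction n v - reaction n w) <= (n + 2) * (M + 3) ^ 2 * Rabs (v - w).
Proof.
  apply Rabs_le_between in v_near. apply Rabs_le_between in w_near. unfold reaction.
  replace ((n - 2) * v * (2 - v) - (n - 2) * w * (2 - w))
    with ((n - 2) * (2 - v - w) * (v - w)) by ring.
  rewrite !Rabs_mult, (Rabs_pos_eq (n - 2)) by lra.
  apply Rmult_le_compat_r; [apply Rabs_pos |].
  assert (Hvw : Rabs (2 - v - w) <= 2 * M + 4) by (apply Rabs_le; lra).
  pose proof (Rabs_pos (2 - v - w)).
  apply Rle_trans with ((n - 2) * (2 * M + 4)); [apply Rmult_le_compat_l |]; nra.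
Qed.

Lemma drift_bounded : Rabs (n - 5 + v) <= (n + 2) * (M + 3) ^ 2.
Proof. apply Rabs_le_between in v_near. apply Rabs_le. split; nra. Qed.

End ReactionBounds.

Lemma continuous_reaction n v : continuous (reaction n) v.
Proof.
  apply (ex_derive_continuous (K := R_AbsRing) (V := R_NormedModule)).
  unfold reaction. auto_derive. exact I.
Qed.

Lemma reaction_picard_fixpoint n M : 2 <= n -> 0 < M ->
  exists L U, 0 < L /\ admissible U /\
    forall x, picard_map (n - 5) M L (reaction n) U x = U x.
Proof.
  intros Hn HM.
  set (C := (n + 2) * (M + 3) ^ 2). set (L := Rmin 1 (/ (12 * C))).
  assert (HC : 1 <= C) by (unfold C; nra).
  assert (HL : 0 < L) by (apply Rmin_pos; [lra | apply Rinv_0_lt_compat; lra]).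
  assert (HCL : 12 * C * L <= 1).
  { apply Rle_trans with (12 * C * / (12 * C)); [apply Rmult_le_compat_l, Rmin_r; lra |].
    rewrite Rinv_r; lra. }
  pose proof (Rmin_l 1 (/ (12 * C))) as HL1.
  pose proof (continuous_reaction n) as Hcont.
  assert (Hf : forall v, Rabs (v - M) <= 1 -> Rabs (reaction n v) <= C)
    by (intros; apply reaction_bounded; auto).
  assert (Hlip : forall v w, Rabs (v - M) <= 1 -> Rabs (w - M) <= 1 ->
            Rabs (reaction n v - reaction n w) <= C * Rabs (v - w))
    by (intros; apply reaction_lipschitz; auto).
  assert (Hdrift : forall v, Rabs (v - M) <= 1 -> Rabs (n - 5 + v) <= C)
    by (intros; apply drift_bounded; auto).
  destruct (contraction_fixpoint (picard_map (n - 5) M L (reaction n))) as [U [HU Hfix]].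
  - apply (admissible_picard_map _ _ _ C); auto.
  - apply (picard_map_contraction _ _ _ C); auto.
  - exists L, U. auto.
Qed.

Theorem theorem3p1 (N : nat) (HN : (3 <= N)%nat) :
  exists S : R -> Prop,
    (forall M, S M -> 0 < M) /\
    (forall a b, 0 < a -> a < b -> exists M, S M /\ a < M < b) /\
    (forall M, S M ->
       exists (L : R) (V : R -> R),
         0 < L /\
         (* V in C([0,L]) *)
         (forall s, 0 <= s <= L ->
            filterlim V (within (fun x => 0 <= x <= L) (locally s)) (locally (V s))) /\
         (* V in C^2((0,L)) *)
         (forall s, 0 < s < L ->
            ex_derive V s /\ ex_derive (Derive V) s /\
            continuous (Derive (Derive V)) s) /\
         (* the equation on (0,L) *)
         (forall s, 0 < s < L ->
            ode_lhs N s (V s) (Derive V s) (Derive (Derive V) s) = 0) /\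
         V 0 = M).
Proof.
  exists (fun M => 0 < M). split; [auto |]. split.
  { intros a b Ha Hab. exists ((a + b) / 2). lra. }
  intros M HM. set (n := INR N).
  assert (Hn : 2 <= n) by (apply (le_INR 2); lia).
  destruct (reaction_picard_fixpoint n M Hn HM) as (L & U & HL & HU & Hfix).
  pose proof (continuous_reaction n) as Hcont.
  exists L, (primitive M U). split; [exact HL |]. split; [| split; [| split]].
  - intros s _. eapply filterlim_filter_le_1; [apply filter_le_within |].
    apply continuous_primitive, HU.
  - intros s Hs. split; [| split].
    + eexists. apply is_derive_primitive, HU.
    + eapply ex_derive_ext; [intros t; symmetry; apply Derive_primitive, HU |].
      eexists. apply (is_derive_picard_fixpoint (n - 5) M L (reaction n)); auto.
    + apply (continuous_Derive2_primitive_fixpoint (n - 5) M L (reaction n)); auto.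
  - intros s Hs. rewrite Derive_primitive by apply HU.
    rewrite (Derive2_primitive_fixpoint (n - 5) M L (reaction n)) by auto.
    apply ode_lhs_reaction. lra.
  - apply primitive_0.
Qed.
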